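(* Let $k,l\geq 0$. In the $\mathbb{Q}$-vector space with basis the surjective maps $\sigma:[k+l]\twoheadrightarrow[p]$, $p\leq k+l$, the following identity holds: \[\sum_{\substack{\sigma'\in \mathrm{inc}(k),\ \sigma''\in \mathrm{inc}(l)\\ \tau \in \mathrm{qsh}(\max(\sigma'),\max(\sigma''))}}\frac{\tau\circ(\sigma' \otimes \sigma'')}{\sigma'!\,\sigma''!} =\sum_{\substack{\sigma\in \mathrm{sh}(k,l)\\ \tau\in \mathrm{inc}(k+l)}} \frac{\tau\circ \sigma}{\tau!}. \]
   Context: For $n\in\mathbb{N}$, $[n]=\{1,\dots,n\}$, $[0]=\emptyset$. For $k,l\geq 0$, a $(k,l)$-quasi-shuffle is a surjective map $\sigma:[k+l]\twoheadrightarrow[n]$ (for some $n$) with $\sigma(1)<\dots<\sigma(k)$ and $\sigma(k+1)<\dots<\sigma(k+l)$; $\mathrm{qsh}(k,l)$ is the set of these. $\mathrm{sh}(k,l)\subseteq\mathrm{qsh}(k,l)$ is the set of injective ones (shuffles, i.e. bijections $[k+l]\to[k+l]$). For $k\geq 0$, $\mathrm{inc}(k)$ is the set of surjective maps $\sigma:[k]\twoheadrightarrow[m]$ (some $m$) with $\sigma(1)\leq\dots\leq\sigma(k)$ (for $k=0$ it consists of the empty map, with $\max=0$). For a map $\sigma:[k]\to[m]$, $\sigma!=\prod_{i=1}^m|\sigma^{-1}(i)|!$, and $\max(\sigma)$ is its largest value ($0$ if $k=0$). For $\sigma':[k]\to[a]$ and $\sigma'':[l]\to[b]$, $\sigma'\otimes\sigma'':[k+l]\to[a+b]$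 is the map $i\mapsto\sigma'(i)$ for $i\leq k$ and $i\mapsto a+\sigma''(i-k)$ for $i>k$. *)

From mathcomp Require Import all_boot all_algebra.
Set Implicit Arguments. Unset Strict Implicit. Unset Printing Implicit Defensive.
Import GRing.Theory Num.Theory.

(* A map sigma : [n] -> [m] (1-indexed, as in the paper) is encoded as the
   sequence s = [:: sigma 1; ...; sigma n] : seq nat. *)

(* max(sigma): largest value, 0 for the empty map *)
Definition smax (s : seq nat) : nat := \max_(x <- s) x.

Definition is_surj (s : seq nat) : bool :=
  all (fun x => 0 < x) s && all (fun j => j \in s) (iota 1 (smax s)).

Definition incb (s : seq nat) : bool := is_surj s && sorted leq s.

Definition qshb (k l : nat) (s : seq nat) : bool :=
  [&& size s == k + l, is_surj s, sorted ltn (take k s) & sorted ltn (drop k s)].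

Definition shb (k l : nat) (s : seq nat) : bool := qshb k l s && uniq s.

Definition sfact (s : seq nat) : nat := \prod_(j <- iota 1 (smax s)) (count_mem j s)`!.

Definition tensor (s1 s2 : seq nat) : seq nat := s1 ++ [seq smax s1 + x | x <- s2].

Definition comp (t s : seq nat) : seq nat := [seq nth 0 t x.-1 | x <- s].

(* all maps [n] -> [n] (values in 1..n), each listed exactly once;
   every surjection [n] ->> [m] (m <= n) occurs here *)
Definition maps (n : nat) : seq (seq nat) :=
  [seq [seq (val (f i)).+1 | i <- enum 'I_n] | f : {ffun 'I_n -> 'I_n}].

Definition Inc (k : nat) : seq (seq nat) := [seq s <- maps k | incb s].
Definition Qsh (k l : nat) : seq (seq nat) := [seq s <- maps (k + l) | qshb k l s].
Definition Sh (k l : nat) : seq (seq nat) := [seq s <- maps (k + l) | shb k l s].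

(* Formal Q-linear combinations of maps (encoded as seq nat): coefficient functions. *)
Definition lincomb := seq nat -> rat.
Definition basis (g : seq nat) : lincomb := fun h => ((h == g)%:R)%R.

Definition lhs_sum (k l : nat) : lincomb := fun h =>
  (\sum_(s1 <- Inc k) \sum_(s2 <- Inc l) \sum_(t <- Qsh (smax s1) (smax s2))
     (((sfact s1)%:R * (sfact s2)%:R)^-1 * basis (comp t (tensor s1 s2)) h))%R.

Definition rhs_sum (k l : nat) : lincomb := fun h =>
  (\sum_(s <- Sh k l) \sum_(t <- Inc (k + l))
     ((sfact t)%:R^-1 * basis (comp t s) h))%R.

From Pilot Require Import Defs.
From mathcomp Require Import all_boot all_algebra.
From mathcomp Require Import zify ring.
From Stdlib Require Import FunctionalExtensionality.
Set Implicit Arguments. Unset Strict Implicit. Unset Printing Implicit Defensive.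
Import GRing.Theory Num.Theory.

(* Compare coefficients at a fixed map h, with first k values u and last l
   values v.  A left term tau o (s' (x) s'') equals h exactly when h is
   surjective with u and v weakly increasing, and the term is then unique:
   s' and s'' are the standardizations of u and v, and tau lists their
   distinct values.  So the left coefficient is 1 / (u! v!), where w! is the
   product of the factorials of the multiplicities in w.  On the right,
   tau o s = h forces tau = sort h, so the right coefficient is N / h!, with
   N the number of (k,l)-shuffles s such that (sort h) o s = h.  It remains
   to prove N u! v! = h!, i.e. that N is the product over the values j of the
   binomial coefficients C(u_j + v_j, u_j).  The top position of sort h is
   reached by s from the last entry of u or from the last entry of v, and
   only when that entry is the maximum of h; deleting it gives Pascal's rule
   for N, and the identity follows by induction on k + l. *)

Notation cmp := Defs.comp.

Lemma mem_maps n s :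
  (s \in maps n) = (size s == n) && all (fun x => 0 < x <= n) s.
Proof.
apply/idP/idP.
- case/mapP => f _ ->; rewrite size_map size_enum_ord eqxx /=.
  by apply/allP => x /mapP [i _ ->]; rewrite ltn_ord.
- case/andP => /eqP Hs /allP Ha; apply/mapP.
  have n_gt0 (i : 'I_n) : 0 < n by case: i; case: n {Hs Ha}.
  pose f := [ffun i : 'I_n => Ordinal (ltn_pmod (nth 0 s i).-1 (n_gt0 i))].
  exists f; first by rewrite mem_enum.
  rewrite -[LHS](mkseq_nth 0) /mkseq Hs -val_enum_ord -map_comp.
  apply/eq_in_map => i _ /=; rewrite ffunE /=.
  have /andP [H1 H2] : 0 < nth 0 s i <= n by apply: Ha; rewrite mem_nth ?Hs.
  by rewrite modn_small prednK.
Qed.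

Lemma maps_uniq n : uniq (maps n).
Proof.
rewrite map_inj_uniq ?enum_uniq // => f g /eq_in_map fg.
by apply/ffunP => i; apply: val_inj; case: (fg i (mem_enum _ i)).
Qed.

Lemma Inc_uniq k : uniq (Inc k).
Proof. exact/filter_uniq/maps_uniq. Qed.

Lemma Qsh_uniq k l : uniq (Qsh k l).
Proof. exact/filter_uniq/maps_uniq. Qed.

Lemma sum_seq_single (V : nmodType) (T : eqType) (r : seq T) x0 (F : T -> V) :
  uniq r -> x0 \in r -> (forall x, x \in r -> x != x0 -> F x = 0%R) ->
  (\sum_(x <- r) F x)%R = F x0.
Proof.
move=> Ur x0r F0; rewrite (bigD1_seq x0) //= big1_seq ?addr0 // => x /andP [ne_x xr].
exact: F0.
Qed.

Lemma leq_smax s x : x \in s -> x <= smax s.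
Proof. by move=> Hx; apply: leq_bigmax_seq Hx _. Qed.

Lemma smax_leP s m : reflect (forall x, x \in s -> x <= m) (smax s <= m).
Proof.
apply: (iffP idP) => [le_m x /leq_smax /leq_trans|]; first exact.
by move=> H; apply/bigmax_leqP_seq => x Hx _; apply: H.
Qed.

Lemma eq_smax s s' : s =i s' -> smax s = smax s'.
Proof.
by move=> E; apply/eqP; rewrite eqn_leq;
  apply/andP; split; apply/smax_leP => x Hx; apply: leq_smax; rewrite ?E // -E.
Qed.

Lemma smax_iota n : smax (iota 1 n) = n.
Proof.
apply/eqP; rewrite eqn_leq; apply/andP; split.
  by apply/smax_leP => x; rewrite mem_iota; lia.
by case: n => // n; apply: leq_smax; rewrite mem_iota; lia.
Qed.

Lemma eq_is_surj s s' : s =i s' -> is_surj s = is_surj s'.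
Proof.
move=> E; rewrite /is_surj (eq_smax E) (eq_all_r E).
by congr (_ && _); apply: eq_all => j; rewrite E.
Qed.

Lemma is_surj_gt0 s : is_surj s -> all (fun x => 0 < x) s.
Proof. by case/andP. Qed.

Lemma is_surjP s : is_surj s -> forall j, 0 < j <= smax s -> j \in s.
Proof. by case/andP => _ /allP H j Hj; apply: H; rewrite mem_iota; lia. Qed.

Lemma smax_surj_le_size s : is_surj s -> smax s <= size s.
Proof.
case/andP => _ /allP H; rewrite -(size_iota 1 (smax s)).
exact: uniq_leq_size (iota_uniq _ _) H.
Qed.

Lemma is_surj_mem_iota s : is_surj s -> s =i iota 1 (smax s).
Proof.
move=> Is x; rewrite mem_iota; apply/idP/idP => [Hx|]; last exact: is_surjP.
by have := allP (is_surj_gt0 Is) x Hx; have := leq_smax Hx; lia.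
Qed.

Lemma is_surj_maps s : is_surj s -> s \in maps (size s).
Proof.
move=> Is; rewrite mem_maps eqxx; apply/allP => x Hx.
by rewrite (allP (is_surj_gt0 Is)) // (leq_trans (leq_smax Hx)) ?smax_surj_le_size.
Qed.

Lemma perm_iota_maps n s : perm_eq s (iota 1 n) -> s \in maps n.
Proof.
move=> H; rewrite mem_maps (perm_size H) size_iota eqxx /=.
by apply/allP => x; rewrite (perm_mem H) mem_iota; lia.
Qed.

(** * Multiplicity factorials and standardization *)

(* Unlike [sfact], this does not require the values to be 1..max, so it is
   invariant under relabelling ([mfact_map]) and permutation. *)
Definition mfact (w : seq nat) : nat := \prod_(x <- undup w) (count_mem x w)`!.

Lemma mfact_over r w : uniq r -> {subset w <= r} ->
  mfact w = \prod_(x <- r) (count_mem x w)`!.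
Proof.
move=> Ur wr; rewrite [RHS](bigID (mem w)) /=.
rewrite [X in _ = _ * X]big1 ?muln1 => [|x /count_memPn -> //].
rewrite -big_filter; apply: perm_big; apply: uniq_perm.
- exact: undup_uniq.
- exact: filter_uniq.
by move=> x; rewrite mem_undup mem_filter; case: (boolP (x \in w)) => //= /wr.
Qed.

Lemma sfact_mfact s : all (fun x => 0 < x) s -> sfact s = mfact s.
Proof.
move=> /allP s_gt0; rewrite (@mfact_over (iota 1 (smax s))) ?iota_uniq //.
by move=> x Hx; rewrite mem_iota; have := s_gt0 _ Hx; have := leq_smax Hx; lia.
Qed.

Lemma perm_mfact w w' : perm_eq w w' -> mfact w = mfact w'.
Proof.
move=> ww'; rewrite [RHS](@mfact_over (undup w)) ?undup_uniq => [||x] //.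
  by rewrite /mfact; apply: eq_bigr => x _; rewrite (permP ww').
by rewrite mem_undup (perm_mem ww').
Qed.

Lemma mfact_rcons w x : mfact (rcons w x) = mfact w * (count_mem x w).+1.
Proof.
have U := undup_uniq (x :: w).
have Hx : x \in undup (x :: w) by rewrite mem_undup mem_head.
rewrite (@mfact_over (undup (x :: w))) => [|//|y]; last by rewrite mem_undup mem_rcons.
rewrite (@mfact_over (undup (x :: w))) => [|//|y Hy]; last first.
  by rewrite mem_undup inE Hy orbT.
rewrite !(bigD1_seq x Hx U) /= -cats1 count_cat /= eqxx addn1 factS.
rewrite (eq_bigr (fun y => (count_mem y w)`!)) => [|y ne_yx]; first by ring.
have /negbTE ne_xy : x != y by rewrite eq_sym.
by rewrite count_cat /= ne_xy !addn0.
Qed.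

Lemma mfact_map f s : {in s &, injective f} -> mfact (map f s) = mfact s.
Proof.
move=> f_inj; rewrite (@mfact_over (map f (undup s))).
- rewrite big_map /mfact !big_seq; apply: eq_bigr => x; rewrite mem_undup => Hx.
  rewrite count_map; congr (_ `!); apply: eq_in_count => y Hy /=.
  by apply/eqP/eqP => [/(f_inj _ _ Hy Hx)|->].
- by rewrite map_inj_in_uniq ?undup_uniq // => y z; rewrite !mem_undup; apply: f_inj.
- by move=> y /mapP [z Hz ->]; rewrite map_f ?mem_undup.
Qed.

Lemma mfact_gt0 s : 0 < mfact s.
Proof. by apply: prodn_gt0 => x; apply: fact_gt0. Qed.

(* For weakly increasing w, [std w] is the surjection sigma in the unique
   factorization w = tau o sigma with tau strictly increasing. *)
Definition std (w : seq nat) := [seq (index x (undup w)).+1 | x <- w].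

Lemma std_gt0 w : all (fun x => 0 < x) (std w).
Proof. by apply/allP => x /mapP [y _ ->]. Qed.

Lemma mfact_std w : mfact (std w) = mfact w.
Proof.
rewrite mfact_map // => x y Hx Hy /= [] E.
by apply: (index_inj 0 _ _ E); rewrite mem_undup.
Qed.

Lemma sorted_undup_ltn w : sorted leq w -> sorted ltn (undup w).
Proof.
move=> Sw; rewrite ltn_sorted_uniq_leq undup_uniq /=.
exact: (subseq_sorted leq_trans (undup_subseq w) Sw).
Qed.

Lemma std_props w : sorted leq w ->
  [/\ size (std w) = size w, all (fun x => 0 < x <= size (undup w)) (std w),
      (forall j, 0 < j <= size (undup w) -> j \in std w),
      sorted leq (std w) & smax (std w) = size (undup w)].
Proof.
move=> Sw; have Sud := sorted_undup_ltn Sw.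
have Hall : all (fun x => 0 < x <= size (undup w)) (std w).
  by apply/allP => x /mapP [y Hy ->]; rewrite /= index_mem mem_undup Hy.
have Hsurj j : 0 < j <= size (undup w) -> j \in std w.
  move=> Hj; apply/mapP; exists (nth 0 (undup w) j.-1).
    by rewrite -mem_undup mem_nth //; lia.
  by rewrite index_uniq ?undup_uniq; lia.
split => //.
- by rewrite size_map.
- apply: (homo_sorted_in (e := leq) (P := mem w)) => // x y Hx Hy le_xy.
  rewrite leqNgt; apply/negP => lt_yx.
  have := sorted_ltn_nth ltn_trans 0 Sud (index y (undup w)) (index x (undup w)).
  rewrite !inE !index_mem !mem_undup Hx Hy => /(_ isT isT lt_yx).
  by rewrite !nth_index ?mem_undup //; lia.
- apply/eqP; rewrite eqn_leq; apply/andP; split.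
    by apply/smax_leP => x Hx; have /= := allP Hall _ Hx; lia.
  by case E: (size (undup w)) => [|m] //; apply/leq_smax/Hsurj; lia.
Qed.

Lemma std_Inc w : sorted leq w -> std w \in Inc (size w).
Proof.
move=> Sw; have [Zw Aw Hw Ow Mw] := std_props Sw.
rewrite mem_filter mem_maps Zw eqxx /incb Ow /is_surj !andbT /=.
rewrite -andbA; apply/and3P; split.
- by apply/allP => x Hx; have /= /andP[] := allP Aw _ Hx.
- by apply/allP => j; rewrite mem_iota Mw => Hj; apply: Hw; lia.
- apply/allP => x Hx; have /= /andP [-> le_x] := allP Aw _ Hx.
  exact: leq_trans le_x (size_undup w).
Qed.

Lemma comp_undup_std w t : cmp (undup w ++ t) (std w) = w.
Proof.
rewrite /cmp /std -map_comp -[RHS]map_id; apply/eq_in_map => x Hx /=.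
by rewrite nth_cat index_mem mem_undup Hx nth_index // mem_undup.
Qed.

Lemma comp_shift_std t w :
  cmp (t ++ undup w) [seq size t + x | x <- std w] = w.
Proof.
rewrite /cmp /std -!map_comp -[RHS]map_id; apply/eq_in_map => x Hx /=.
by rewrite addnS /= nth_cat ltnNge leq_addr /= addKn nth_index // mem_undup.
Qed.

Lemma comp_sorted_std t s : sorted ltn t -> all (fun y => 0 < y <= size t) s ->
  (forall j, 0 < j <= size t -> j \in s) -> sorted leq s ->
  [/\ sorted leq (cmp t s), undup (cmp t s) = t & std (cmp t s) = s].
Proof.
move=> St Hall Hsurj Ss.
have Ut : uniq t by apply: (sorted_uniq ltn_trans ltnn St).
have St' : sorted leq t by move: St; rewrite ltn_sorted_uniq_leq => /andP[].
have Sw : sorted leq (cmp t s).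
  apply: (homo_sorted_in (e := leq) (P := [pred y | 0 < y <= size t])) => // y z.
  rewrite !inE => Hy Hz le_yz; apply: (sorted_leq_nth leq_trans leqnn 0 St');
    rewrite ?inE; lia.
have Eu : undup (cmp t s) = t.
  apply: (irr_sorted_eq ltn_trans ltnn) => //; first exact: sorted_undup_ltn.
  move=> x; rewrite mem_undup; apply/mapP/idP.
  - by case=> y Hy ->; apply: mem_nth; have /= := allP Hall _ Hy; lia.
  - move=> Hx; exists (index x t).+1; last by rewrite /= nth_index.
    by apply: Hsurj; rewrite index_mem Hx.
split => //; rewrite /std Eu -map_comp -[RHS]map_id; apply/eq_in_map => y Hy /=.
by have /= /andP [y_gt0 y_le] := allP Hall _ Hy; rewrite index_uniq ?prednK //; lia.
Qed.

(** * The left-hand side *)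

Lemma IncP n s : s \in Inc n ->
  [/\ size s = n, sorted leq s, is_surj s & all (fun x => 0 < x <= n) s].
Proof. by rewrite mem_filter mem_maps => /andP [/andP [I S] /andP [/eqP Z A]]. Qed.

Lemma comp_cat t s1 s2 : cmp t (s1 ++ s2) = cmp t s1 ++ cmp t s2.
Proof. exact: map_cat. Qed.

Lemma comp_tensor t s1 s2 :
  all (fun y => 0 < y) s1 -> all (fun y => 0 < y) s2 ->
  cmp t (tensor s1 s2) = cmp (take (smax s1) t) s1 ++ cmp (drop (smax s1) t) s2.
Proof.
move=> /allP s1_gt0 /allP s2_gt0; rewrite comp_cat /cmp -map_comp; congr (_ ++ _).
  apply/eq_in_map => y Hy; rewrite nth_take //.
  by have := s1_gt0 y Hy; have := leq_smax Hy; lia.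
apply/eq_in_map => y Hy /=; rewrite nth_drop.
by have := s2_gt0 y Hy; case: y {Hy} => // y _; rewrite addnS.
Qed.

Definition bisorted k l h :=
  [&& size h == k + l, is_surj h, sorted leq (take k h) & sorted leq (drop k h)].

Definition weight k l h : rat :=
  if bisorted k l h then (((mfact (take k h) * mfact (drop k h))%:R)^-1)%R else 0%R.

Lemma comp_tensor_bisorted k l s1 s2 t :
  s1 \in Inc k -> s2 \in Inc l -> t \in Qsh (smax s1) (smax s2) ->
  let h := cmp t (tensor s1 s2) in
  [/\ bisorted k l h, s1 = std (take k h), s2 = std (drop k h)
    & t = undup (take k h) ++ undup (drop k h)].
Proof.
move=> /IncP [Z1 S1 I1 _] /IncP [Z2 S2 I2 _].
rewrite mem_filter mem_maps => /andP [/and4P [/eqP Zt It T1 T2] _] h.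
set a := smax s1 in Zt T1 T2 *; set b := smax s2 in Zt T2 *.
have Za : size (take a t) = a by rewrite size_takel // Zt leq_addr.
have Zb : size (drop a t) = b by rewrite size_drop Zt addKn.
have block (s t' : seq nat) : is_surj s -> sorted leq s -> sorted ltn t' ->
    size t' = smax s ->
    [/\ sorted leq (cmp t' s), undup (cmp t' s) = t' & std (cmp t' s) = s].
  move=> Is Ss St' Zt'; apply: comp_sorted_std; rewrite ?Zt' //; last exact: is_surjP.
  apply/allP => y Hy; rewrite (allP (is_surj_gt0 Is)) //=; exact: leq_smax.
have [W1 U1 E1] := block _ _ I1 S1 T1 Za.
have [W2 U2 E2] := block _ _ I2 S2 T2 Zb.
have Eh : h = cmp (take a t) s1 ++ cmp (drop a t) s2.
  by rewrite /h comp_tensor // is_surj_gt0.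
have Zu : size (cmp (take a t) s1) = k by rewrite size_map.
rewrite Eh take_size_cat // drop_size_cat // U1 U2 E1 E2 cat_take_drop.
split => //; rewrite /bisorted take_size_cat // drop_size_cat // W1 W2 !andbT.
rewrite size_cat Zu size_map Z2 eqxx /=.
rewrite -(eq_is_surj (s := t)) // => x.
rewrite mem_cat -[x \in cmp _ s1]mem_undup -[x \in cmp _ s2]mem_undup U1 U2.
by rewrite -mem_cat cat_take_drop.
Qed.

Lemma bisorted_decomp k l h : bisorted k l h ->
  let u := take k h in let v := drop k h in
  [/\ std u \in Inc k, std v \in Inc l,
      undup u ++ undup v \in Qsh (smax (std u)) (smax (std v))
    & cmp (undup u ++ undup v) (tensor (std u) (std v)) = h].
Proof.
case/and4P => /eqP Zh Ih Su Sv u v.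
have [_ _ _ _ Mu] := std_props Su; have [_ _ _ _ Mv] := std_props Sv.
have Zu : size u = k by rewrite size_takel // Zh leq_addr.
have Zv : size v = l by rewrite size_drop Zh addKn.
split; [by rewrite -Zu std_Inc | by rewrite -Zv std_Inc | |].
- set t := _ ++ _.
  have Et : t =i h by move=> x; rewrite -(cat_take_drop k h) !mem_cat !mem_undup.
  have It : is_surj t by rewrite (eq_is_surj Et).
  rewrite mem_filter Mu Mv /qshb It take_size_cat // drop_size_cat //.
  rewrite !sorted_undup_ltn // andbT size_cat eqxx /=.
  by rewrite -size_cat is_surj_maps.
- by rewrite /tensor Mu -/u comp_cat comp_undup_std comp_shift_std cat_take_drop.
Qed.

Lemma comp_tensor_eq k l h s1 s2 t : bisorted k l h ->
  s1 \in Inc k -> s2 \in Inc l -> t \in Qsh (smax s1) (smax s2) ->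
  (h == cmp t (tensor s1 s2)) =
  [&& s1 == std (take k h), s2 == std (drop k h)
    & t == undup (take k h) ++ undup (drop k h)].
Proof.
move=> Bh Hs1 Hs2 Ht; apply/eqP/and3P => [-> | [/eqP-> /eqP-> /eqP->]].
  by have [_ <- <- <-] := comp_tensor_bisorted Hs1 Hs2 Ht.
by have [_ _ _ ->] := bisorted_decomp Bh.
Qed.

Lemma lhs_sum_weight k l h : lhs_sum k l h = weight k l h.
Proof.
rewrite /lhs_sum /weight /basis.
case: ifP => [Bh | nBh]; last first.
  apply: big1_seq => s1 /andP [_ H1]; apply: big1_seq => s2 /andP [_ H2].
  apply: big1_seq => t /andP [_ Ht]; case: eqP => [Eh | _]; last by rewrite mulr0.
  by have [] := comp_tensor_bisorted H1 H2 Ht; rewrite -Eh nBh.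
have [H1 H2 H3 _] := bisorted_decomp Bh.
under eq_big_seq => s1 Hs1 do under eq_big_seq => s2 Hs2 do
  under eq_big_seq => t Ht do rewrite (comp_tensor_eq Bh Hs1 Hs2 Ht).
rewrite (sum_seq_single (Inc_uniq k) H1) => [|s1 _ /negbTE ne1]; last first.
  by rewrite big1 // => s2 _; rewrite big1 // => t _; rewrite ne1 mulr0.
rewrite (sum_seq_single (Inc_uniq l) H2) => [|s2 _ /negbTE ne2]; last first.
  by rewrite big1 // => t _; rewrite eqxx ne2 mulr0.
rewrite (sum_seq_single (Qsh_uniq _ _) H3) => [|t _ /negbTE ne3]; last first.
  by rewrite !eqxx ne3 mulr0.
by rewrite !eqxx mulr1 -natrM !sfact_mfact ?std_gt0 ?mfact_std.
Qed.

(** * Counting shuffles *)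

Lemma count_bij_in (T1 T2 : eqType) (r1 : seq T1) (r2 : seq T2)
    (p1 : pred T1) (p2 : pred T2) (f : T2 -> T1) :
  uniq r1 -> uniq r2 ->
  {in [pred y | (y \in r2) && p2 y] &, injective f} ->
  (forall y, y \in r2 -> p2 y -> (f y \in r1) && p1 (f y)) ->
  (forall x, x \in r1 -> p1 x -> exists2 y, (y \in r2) && p2 y & x = f y) ->
  count p1 r1 = count p2 r2.
Proof.
move=> U1 U2 f_inj f_to f_onto.
rewrite -!size_filter -(size_map f (filter p2 r2)); apply: perm_size.
apply: uniq_perm; first exact: filter_uniq.
  rewrite map_inj_in_uniq ?filter_uniq // => y1 y2; rewrite !mem_filter => H1 H2.
  by apply: f_inj; rewrite inE andbC ?H1 ?H2.
move=> x; rewrite mem_filter; apply/andP/mapP => [[p1x x_r1] | [y]].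
  have [y /andP [y_r2 p2y] ->] := f_onto x x_r1 p1x.
  by exists y; rewrite // mem_filter p2y.
by rewrite mem_filter => /andP [p2y y_r2] ->; have /andP [] := f_to y y_r2 p2y.
Qed.

Lemma count_split (T : Type) (p q : pred T) r :
  count p r = count (fun x => p x && q x) r + count (fun x => p x && ~~ q x) r.
Proof. by elim: r => //= x r ->; case: (p x); case: (q x) => /=; lia. Qed.

Lemma sorted_rcons_all (T : eqType) (e : rel T) s x :
  sorted e s -> all (fun y => e y x) s -> sorted e (rcons s x).
Proof.
case: s => // y s Ss /allP Ax; rewrite /= rcons_path.
by apply/andP; split; [exact: Ss | apply: Ax; exact: mem_last].
Qed.

Lemma sorted_rconsK (T : Type) (e : rel T) s x : sorted e (rcons s x) -> sorted e s.
Proof. by rewrite -cats1 => /(take_sorted (size s)); rewrite take_size_cat. Qed.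

Lemma sorted_rcons_leq_last s x : sorted leq (rcons s x) -> all (leq^~ x) (rcons s x).
Proof.
rewrite -rev_sorted rev_rcons /= => Sx.
have := order_path_min (leT := fun a b => b <= a) (fun a b c h1 h2 => leq_trans h2 h1) Sx.
by rewrite all_rev -cats1 all_cat /= leqnn => ->.
Qed.

Lemma sort_rcons_max w w0 m : perm_eq w (rcons w0 m) -> all (leq^~ m) w0 ->
  sort leq w = rcons (sort leq w0) m.
Proof.
move=> ww0 le_m; apply: (sorted_eq leq_trans anti_leq (sort_sorted leq_total w)).
  apply: sorted_rcons_all; first exact: (sort_sorted leq_total).
  by apply/allP => x; rewrite mem_sort; apply: (allP le_m).
rewrite perm_sort (perm_trans ww0) // perm_rcons perm_sym perm_rcons.
by rewrite perm_cons perm_sort.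
Qed.

Lemma perm_iotaS s n : perm_eq s (iota 1 n.+1) = perm_eq s (n.+1 :: iota 1 n).
Proof.
have -> : iota 1 n.+1 = rcons (iota 1 n) n.+1.
  by rewrite -cats1 -[n.+1]addn1 iotaD /= add1n addn1.
by apply/idP/idP => H; apply: perm_trans H _; rewrite ?perm_rcons // perm_sym perm_rcons.
Qed.

Lemma comp_iota t : cmp t (iota 1 (size t)) = t.
Proof.
rewrite -(addn0 1) iotaDl /cmp -map_comp -[RHS](mkseq_nth 0 t).
by apply: eq_map => x /=; rewrite add0n.
Qed.

Lemma perm_comp_iota t s : perm_eq s (iota 1 (size t)) -> perm_eq (cmp t s) t.
Proof. by move=> st; rewrite -{2}(comp_iota t); apply: perm_map. Qed.

Lemma nth_comp t s i : i < size s -> nth 0 (cmp t s) i = nth 0 t (nth 0 s i).-1.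
Proof. exact: nth_map. Qed.

Lemma comp_rcons_low t y s : all (fun x => 0 < x <= size t) s ->
  cmp (rcons t y) s = cmp t s.
Proof.
move=> /allP Hs; apply/eq_in_map => x Hx; rewrite nth_rcons.
by have := Hs x Hx; case: x {Hx} => //= x ->.
Qed.

Lemma comp_rcons_top t y s : all (fun x => 0 < x <= size t) s ->
  cmp (rcons t y) (rcons s (size t).+1) = rcons (cmp t s) y.
Proof.
move=> Hs; rewrite -[rcons s _]cats1 comp_cat comp_rcons_low //.
by rewrite {2}/cmp /= nth_rcons ltnn eqxx cats1.
Qed.

Definition ins k (s : seq nat) x := take k s ++ x :: drop k s.

Lemma ins_props k s x : k <= size s ->
  [/\ take k.+1 (ins k s x) = rcons (take k s) x,
      drop k.+1 (ins k s x) = drop k s, nth 0 (ins k s x) k = x &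
      perm_eq (ins k s x) (x :: s)].
Proof.
move=> le_ks; have Zk : size (take k s) = k by rewrite size_takel.
rewrite /ins; split.
- by rewrite take_cat Zk ltnNge leqnSn /= subSnn /= take0 cats1.
- by rewrite drop_cat Zk ltnNge leqnSn /= subSnn /= drop0.
- by rewrite nth_cat Zk ltnn subnn.
- by rewrite -[X in perm_eq _ (_ :: X)](cat_take_drop k s) (perm_catCA _ [:: x]).
Qed.

Lemma ins_inj k s1 s2 x : k <= size s1 -> k <= size s2 ->
  ins k s1 x = ins k s2 x -> s1 = s2.
Proof.
move=> L1 L2 E; have [_ D1 _ _] := ins_props x L1; have [_ D2 _ _] := ins_props x L2.
have T1 : take k (ins k s1 x) = take k s1 by rewrite take_size_cat // size_takel.
have T2 : take k (ins k s2 x) = take k s2 by rewrite take_size_cat // size_takel.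
by rewrite -(cat_take_drop k s1) -(cat_take_drop k s2) -T1 -T2 -D1 -D2 E.
Qed.

Lemma comp_ins t y s k : all (fun z => 0 < z <= size t) s ->
  cmp (rcons t y) (ins k s (size t).+1) = cmp t (take k s) ++ y :: cmp t (drop k s).
Proof.
move=> /allP Hs.
have Ht : all (fun z => 0 < z <= size t) (take k s) by apply/allP => z /mem_take /Hs.
have Hd : all (fun z => 0 < z <= size t) (drop k s) by apply/allP => z /mem_drop /Hs.
rewrite /ins comp_cat -cat1s comp_cat (comp_rcons_low _ Ht) (comp_rcons_low _ Hd).
by rewrite {2}/cmp /= nth_rcons ltnn eqxx.
Qed.

Definition shuffle k l s :=
  [&& perm_eq s (iota 1 (k + l)), sorted ltn (take k s) & sorted ltn (drop k s)].

Definition nshuffles k l h :=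
  count (fun s => shuffle k l s && (cmp (sort leq h) s == h)) (maps (k + l)).

Section ShuffleFacts.
Variables (k l : nat) (s : seq nat).
Hypothesis sh_s : shuffle k l s.

Lemma shuffle_perm : perm_eq s (iota 1 (k + l)).
Proof. by case/and3P: sh_s. Qed.

Lemma shuffle_size : size s = k + l.
Proof. by rewrite (perm_size shuffle_perm) size_iota. Qed.

Lemma shuffle_range : all (fun x => 0 < x <= k + l) s.
Proof. by apply/allP => x; rewrite (perm_mem shuffle_perm) mem_iota; lia. Qed.

Lemma shuffle_maps : s \in maps (k + l).
Proof. exact: perm_iota_maps shuffle_perm. Qed.

End ShuffleFacts.

Lemma shuffle_iota k l : shuffle k l (iota 1 (k + l)).
Proof. by rewrite /shuffle perm_refl take_iota drop_iota !iota_ltn_sorted. Qed.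

Lemma shuffle_sorted_eq k l s :
  sorted ltn s -> shuffle k l s -> s = iota 1 (k + l).
Proof.
move=> Ss sh_s; apply: (irr_sorted_eq ltn_trans ltnn) => //.
  exact: iota_ltn_sorted.
exact/perm_mem/shuffle_perm.
Qed.

Lemma shuffle_k0 k s : shuffle k 0 s = (s == iota 1 k).
Proof.
apply/idP/eqP => [sh_s | ->]; last by have := shuffle_iota k 0; rewrite addn0.
rewrite -[k]addn0; apply: (shuffle_sorted_eq _ sh_s).
by have /and3P [_] := sh_s; rewrite take_oversize // (shuffle_size sh_s) addn0.
Qed.

Lemma shuffle_0l l s : shuffle 0 l s = (s == iota 1 l).
Proof.
apply/idP/eqP => [sh_s | ->]; last exact: shuffle_iota 0 l.
by apply: (shuffle_sorted_eq _ sh_s); have /and3P [_ _] := sh_s; rewrite drop0.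
Qed.

Lemma sorted_ltn_max_last t m i : sorted ltn t -> all (fun z => z <= m) t ->
  i < size t -> nth 0 t i = m -> i = (size t).-1.
Proof.
move=> St /allP le_m lt_it ti; case: (ltnP i.+1 (size t)) => [lt_i1|]; last by lia.
have := sorted_ltn_nth ltn_trans 0 St i i.+1; rewrite !inE lt_it lt_i1 ti ltnSn.
by move=> /(_ isT isT isT) lt_m; have := le_m _ (mem_nth 0 lt_i1); rewrite leqNgt lt_m.
Qed.

Section TopPosition.
Variables (k l : nat).
Let x := (k + l).+1.

Lemma shuffle_ins s : shuffle k l s -> shuffle k.+1 l (ins k s x).
Proof.
move=> sh_s; have le_k : k <= size s by rewrite (shuffle_size sh_s) leq_addr.
have [T D _ P] := ins_props x le_k.
case/and3P: (sh_s) => Ps S1 S2; have /allP Rs := shuffle_range sh_s.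
rewrite /shuffle addSn perm_iotaS (perm_trans P) ?perm_cons // T D S2 andbT.
by apply: sorted_rcons_all => //; apply/allP => z /mem_take /Rs; rewrite /x; lia.
Qed.

Lemma shuffle_insK s : shuffle k.+1 l s -> nth 0 s k = x ->
  exists2 s', s = ins k s' x & shuffle k l s'.
Proof.
move=> sh_s sk; have Zs := shuffle_size sh_s.
have Zk : size (take k s) = k by rewrite size_takel // Zs; lia.
set s' := take k s ++ drop k.+1 s.
have Es : s = ins k s' x.
  rewrite /ins /s' take_size_cat // drop_size_cat //.
  by rewrite -{1}(cat_take_drop k s) (drop_nth 0) ?sk // Zs; lia.
exists s' => //; have le_k : k <= size s' by rewrite size_cat Zk leq_addr.
have [T D _ P] := ins_props x le_k; rewrite -Es in T D P.
case/and3P: sh_s => Ps S1 S2; rewrite addSn perm_iotaS -/x in Ps.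
rewrite /shuffle -D S2 andbT -(perm_cons x) (perm_trans _ Ps) 1?perm_sym //=.
by move: S1; rewrite T; apply: sorted_rconsK.
Qed.

Lemma shuffle_rcons s : shuffle k l s -> shuffle k l.+1 (rcons s x).
Proof.
move=> sh_s; have le_k : k <= size s by rewrite (shuffle_size sh_s) leq_addr.
case/and3P: (sh_s) => Ps S1 S2; have /allP Rs := shuffle_range sh_s.
rewrite /shuffle addnS perm_iotaS perm_rcons perm_cons Ps (drop_rcons le_k).
rewrite -cats1 takel_cat // S1.
by apply: sorted_rcons_all => //; apply/allP => z /mem_drop /Rs; rewrite /x; lia.
Qed.

Lemma shuffle_rconsK s : shuffle k l.+1 s -> nth 0 s (k + l) = x ->
  exists2 s', s = rcons s' x & shuffle k l s'.
Proof.
move=> sh_s sx; have Zs := shuffle_size sh_s.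
set s' := take (k + l) s.
have Es : s = rcons s' x.
  rewrite -cats1 -sx -{1}(cat_take_drop (k + l) s) (drop_nth 0) ?Zs ?addnS //.
  by rewrite drop_oversize // Zs addnS.
exists s' => //; have le_k : k <= size s' by rewrite size_takel ?Zs; lia.
case/and3P: sh_s => Ps S1 S2; rewrite addnS perm_iotaS -/x Es perm_rcons perm_cons in Ps.
rewrite Es (drop_rcons le_k) -cats1 takel_cat // in S1 S2.
by rewrite /shuffle S1 Ps (sorted_rconsK S2).
Qed.

End TopPosition.

Lemma shuffle_top k l s : shuffle k.+1 l.+1 s ->
  nth 0 s k = k.+1 + l.+1 \/ nth 0 s (k.+1 + l) = k.+1 + l.+1.
Proof.
set m := k.+1 + l.+1 => sh_s; have Zs := shuffle_size sh_s.
have /allP Rs := shuffle_range sh_s.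
have le_m : all (fun z => z <= m) s by apply/allP => z /Rs /andP [].
have m_s : m \in s by rewrite (perm_mem (shuffle_perm sh_s)) mem_iota /m; lia.
have lt_i : index m s < m by rewrite -[X in _ < X]Zs index_mem.
have si : nth 0 s (index m s) = m by rewrite nth_index.
case/and3P: sh_s => _ S1 S2.
case: (ltnP (index m s) k.+1) => [lt_ik | le_ki]; [left | right].
  have le_mt : all (fun z => z <= m) (take k.+1 s).
    by apply/allP => z /mem_take; apply: (allP le_m).
  have Zt : size (take k.+1 s) = k.+1 by rewrite size_takel // Zs; lia.
  have := sorted_ltn_max_last S1 le_mt; rewrite Zt => /(_ _ lt_ik).
  by rewrite nth_take // si => /(_ erefl) /= <-.
have le_md : all (fun z => z <= m) (drop k.+1 s).
  by apply/allP => z /mem_drop; apply: (allP le_m).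
have Zd : size (drop k.+1 s) = l.+1 by rewrite size_drop Zs; lia.
have lt_jl : index m s - k.+1 < l.+1 by move: lt_i; rewrite /m; lia.
have := sorted_ltn_max_last S2 le_md; rewrite Zd => /(_ _ lt_jl).
by rewrite nth_drop subnKC // si => /(_ erefl) /= <-; rewrite subnKC.
Qed.

Lemma count_shuffle_top_left k l (Q Q' : pred (seq nat)) :
  (forall s, shuffle k l s -> Q (ins k s (k + l).+1) = Q' s) ->
  count (fun s => shuffle k.+1 l s && Q s && (nth 0 s k == (k + l).+1)) (maps (k + l).+1)
  = count (fun s => shuffle k l s && Q' s) (maps (k + l)).
Proof.
have le_k s : shuffle k l s -> k <= size s by move/shuffle_size->; apply: leq_addr.
move=> QQ'; apply: (count_bij_in (f := fun s => ins k s (k + l).+1));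
  rewrite ?maps_uniq //.
- by move=> s1 s2 /andP [_ /andP [/le_k ? _]] /andP [_ /andP [/le_k ? _]]; apply: ins_inj.
- move=> s _ /andP [sh_s Q's]; have sh_ins := shuffle_ins sh_s.
  have [_ _ -> _] := ins_props (k + l).+1 (le_k s sh_s).
  by rewrite (shuffle_maps sh_ins : _ \in maps (k + l).+1) sh_ins QQ' // Q's eqxx.
- move=> s _ /andP [/andP [sh_s Qs] /eqP sk]; have [s' Es sh_s'] := shuffle_insK sh_s sk.
  by exists s' => //; rewrite (shuffle_maps sh_s') sh_s' -QQ' // -Es.
Qed.

Lemma count_shuffle_top_right k l (Q Q' : pred (seq nat)) :
  (forall s, shuffle k.+1 l s -> Q (rcons s (k.+1 + l).+1) = Q' s) ->
  count (fun s => shuffle k.+1 l.+1 s && Q s && (nth 0 s k != (k.+1 + l).+1))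
    (maps (k.+1 + l).+1)
  = count (fun s => shuffle k.+1 l s && Q' s) (maps (k.+1 + l)).
Proof.
move=> QQ'; apply: (count_bij_in (f := fun s => rcons s (k.+1 + l).+1));
  rewrite ?maps_uniq //.
- by move=> s1 s2 _ _; apply: rcons_injl.
- move=> s _ /andP [sh_s Q's]; have sh_rc := shuffle_rcons sh_s.
  have /[!addnS] -> := shuffle_maps sh_rc.
  have lt_k : k < size s by rewrite (shuffle_size sh_s); lia.
  have /andP [_ le_sk] := allP (shuffle_range sh_s) _ (mem_nth 0 lt_k).
  by rewrite sh_rc QQ' // Q's nth_rcons lt_k /= neq_ltn ltnS le_sk.
- move=> s _ /andP [/andP [sh_s Qs] ne_sk].
  have sx : nth 0 s (k.+1 + l) = (k.+1 + l).+1.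
    by case: (shuffle_top sh_s) => [/eqP|]; rewrite addnS // (negbTE ne_sk).
  have [s' Es sh_s'] := shuffle_rconsK sh_s sx.
  by exists s' => //; rewrite (shuffle_maps sh_s') sh_s' -QQ' // -Es.
Qed.

Lemma nshuffles_k0 u : sorted leq u -> nshuffles (size u) 0 u = 1.
Proof.
move=> Su; rewrite /nshuffles (sorted_sort leq_trans Su) addn0.
rewrite (eq_in_count (a2 := pred1 (iota 1 (size u)))) => [|s _].
  by rewrite count_uniq_mem ?maps_uniq // perm_iota_maps.
by rewrite shuffle_k0 /=; case: eqP => //= ->; rewrite comp_iota eqxx.
Qed.

Lemma nshuffles_0l v : sorted leq v -> nshuffles 0 (size v) v = 1.
Proof.
move=> Sv; rewrite /nshuffles (sorted_sort leq_trans Sv) add0n.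
rewrite (eq_in_count (a2 := pred1 (iota 1 (size v)))) => [|s _].
  by rewrite count_uniq_mem ?maps_uniq // perm_iota_maps.
by rewrite shuffle_0l /=; case: eqP => //= ->; rewrite comp_iota eqxx.
Qed.

Section LastValue.
Variables (u' v' : seq nat) (a b : nat).
Let u := rcons u' a.
Let v := rcons v' b.
Let k := size u'.
Let l := size v'.
Let M := maxn a b.
Hypotheses (Su : sorted leq u) (Sv : sorted leq v).

Let le_a : all (fun y => y <= a) u := sorted_rcons_leq_last Su.
Let le_b : all (fun y => y <= b) v := sorted_rcons_leq_last Sv.

Let Zu : size u = k.+1. Proof. exact: size_rcons. Qed.
Let Zv : size v = l.+1. Proof. exact: size_rcons. Qed.

Lemma sort_cat_rcons_l : a = M -> sort leq (u ++ v) = rcons (sort leq (u' ++ v)) M.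
Proof.
move=> aM; apply: sort_rcons_max.
  by rewrite -aM; apply/permP => p; rewrite /u -!cats1 !count_cat /=; lia.
rewrite all_cat; apply/andP; split; apply/allP => y Hy.
  by rewrite -aM; apply: (allP le_a); rewrite /u mem_rcons inE Hy orbT.
by have := allP le_b y Hy; rewrite /M; lia.
Qed.

Lemma sort_cat_rcons_r : b = M -> sort leq (u ++ v) = rcons (sort leq (u ++ v')) M.
Proof.
move=> bM; apply: sort_rcons_max; first by rewrite /v -rcons_cat -bM.
rewrite all_cat; apply/andP; split; apply/allP => y Hy.
  by have := allP le_a y Hy; rewrite /M; lia.
by rewrite -bM; apply: (allP le_b); rewrite /v mem_rcons inE Hy orbT.
Qed.

Lemma nth_cat_rcons_l : nth 0 (u ++ v) k = a.
Proof. by rewrite nth_cat Zu ltnSn /u nth_rcons ltnn eqxx. Qed.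

Lemma nth_cat_rcons_r : nth 0 (u ++ v) (k.+1 + l) = b.
Proof. by rewrite nth_cat Zu ltnNge leq_addr /= addKn /v nth_rcons ltnn eqxx. Qed.

Let comp_eq s := cmp (sort leq (u ++ v)) s == u ++ v.

Lemma count_top_left :
  count (fun s => shuffle k.+1 l.+1 s && comp_eq s && (nth 0 s k == (k + l.+1).+1))
    (maps (k + l.+1).+1)
  = if a == M then nshuffles k l.+1 (u' ++ v) else 0.
Proof.
case: eqP => aM.
  pose Q' s := cmp (sort leq (u' ++ v)) s == u' ++ v.
  rewrite (count_shuffle_top_left (Q' := Q')) //.
  move=> s sh_s; rewrite /comp_eq (sort_cat_rcons_l aM).
  have ZT : size (sort leq (u' ++ v)) = k + l.+1 by rewrite size_sort size_cat Zv.
  have Rs := shuffle_range sh_s; rewrite -ZT in Rs.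
  rewrite -[in ins _ _ _]ZT comp_ins // /u cat_rcons.
  rewrite -[X in _ = (cmp _ X == _)](cat_take_drop k s) comp_cat.
  have Zk : size (cmp (sort leq (u' ++ v)) (take k s)) = size u'.
    by rewrite size_map size_takel // (shuffle_size sh_s) leq_addr.
  by rewrite !eqseq_cat // eqseq_cons aM eqxx.
rewrite (eq_in_count (a2 := pred0)) ?count_pred0 // => s _ /=.
apply/negbTE/negP => /andP [/andP [sh_s /eqP E] /eqP sk].
have bM : b = M by move: aM; rewrite /M; lia.
have := congr1 (nth 0 ^~ k) E; rewrite nth_cat_rcons_l nth_comp; last first.
  by rewrite (shuffle_size sh_s); lia.
rewrite sk (sort_cat_rcons_r bM) nth_rcons size_sort size_cat Zu.
have -> : (k + l.+1).+1.-1 = k.+1 + l by lia.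
by rewrite ltnn eqxx => aM'; apply: aM; rewrite aM'.
Qed.

Lemma count_top_right :
  count (fun s => shuffle k.+1 l.+1 s && comp_eq s && ~~ (nth 0 s k == (k + l.+1).+1))
    (maps (k + l.+1).+1)
  = if b == M then nshuffles k.+1 l (u ++ v') else 0.
Proof.
case: eqP => bM.
  rewrite -addSnnS.
  pose Q' s := cmp (sort leq (u ++ v')) s == u ++ v'.
  rewrite (count_shuffle_top_right (Q' := Q')) //.
  move=> s sh_s; rewrite /comp_eq (sort_cat_rcons_r bM).
  have ZT : size (sort leq (u ++ v')) = k.+1 + l by rewrite size_sort size_cat Zu.
  have Rs := shuffle_range sh_s; rewrite -ZT in Rs.
  by rewrite -[in rcons s _]ZT comp_rcons_top // /v -rcons_cat eqseq_rcons bM eqxx andbT.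
have aM : a = M by move: bM; rewrite /M; lia.
rewrite (eq_in_count (a2 := pred0)) ?count_pred0 // => s _ /=.
apply/negbTE/negP => /andP [/andP [sh_s /eqP E] ne_sk].
have sx : nth 0 s (k.+1 + l) = (k + l.+1).+1.
  by case: (shuffle_top sh_s) => [/eqP|//]; rewrite (negbTE ne_sk).
have := congr1 (nth 0 ^~ (k.+1 + l)) E; rewrite nth_cat_rcons_r nth_comp; last first.
  by rewrite (shuffle_size sh_s); lia.
rewrite sx (sort_cat_rcons_l aM) nth_rcons size_sort size_cat Zv /=.
by rewrite ltnn eqxx => bM'; apply: bM; rewrite bM'.
Qed.

Lemma nshuffles_rcons_mfact
    (IHl : nshuffles k l.+1 (u' ++ v) * (mfact u' * mfact v) = mfact (u' ++ v))
    (IHr : nshuffles k.+1 l (u ++ v') * (mfact u * mfact v') = mfact (u ++ v')) :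
  nshuffles k.+1 l.+1 (u ++ v) * (mfact u * mfact v) = mfact (u ++ v).
Proof.
rewrite {1}/nshuffles (count_split _ (fun s => nth 0 s k == (k + l.+1).+1)).
rewrite count_top_left count_top_right.
have Pu : mfact u = mfact u' * (count_mem a u').+1 by rewrite mfact_rcons.
have Pv : mfact v = mfact v' * (count_mem b v').+1 by rewrite mfact_rcons.
have Pl : mfact (u ++ v) = mfact (u' ++ v) * (count_mem a (u' ++ v)).+1.
  rewrite -mfact_rcons; apply: perm_mfact.
  by apply/permP => p; rewrite /u -!cats1 !count_cat /=; lia.
have Pr : mfact (u ++ v) = mfact (u ++ v') * (count_mem b (u ++ v')).+1.
  by rewrite /v -rcons_cat mfact_rcons.
have El : nshuffles k l.+1 (u' ++ v) * (mfact u * mfact v) =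
          mfact (u' ++ v) * (count_mem a u').+1 by rewrite Pu -IHl; ring.
have Er : nshuffles k.+1 l (u ++ v') * (mfact u * mfact v) =
          mfact (u ++ v') * (count_mem b v').+1 by rewrite Pv -IHr; ring.
case: (eqVneq a M) => aM; case: (eqVneq b M) => bM; rewrite mulnDl.
- rewrite El Er.
  have ab : b = a by rewrite aM bM.
  have Cl : count_mem a (u' ++ v) = count_mem a u' + (count_mem a v').+1.
    by rewrite count_cat /v -cats1 count_cat /= ab eqxx; lia.
  have Cr : count_mem b (u ++ v') = (count_mem a u').+1 + count_mem a v'.
    by rewrite count_cat /u -cats1 count_cat /= ab eqxx; lia.
  rewrite Cl in Pl; rewrite Cr in Pr.
  have Elr : mfact (u' ++ v) = mfact (u ++ v').
    apply/eqP; rewrite -(@eqn_pmul2r (count_mem a u' + (count_mem a v').+1).+1) //.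
    by apply/eqP; rewrite -Pl Pr; congr (_ * _); lia.
  by rewrite -Elr Pl ab; ring.
- rewrite El addn0 Pl count_cat; congr (_ * _).
  have -> : count_mem a v = 0.
    by apply/count_memPn/negP => /(allP le_b); move: bM; rewrite /M; lia.
  by rewrite addn0.
- rewrite Er add0n Pr count_cat; congr (_ * _).
  have -> : count_mem b u = 0.
    by apply/count_memPn/negP => /(allP le_a); move: aM; rewrite /M; lia.
  by rewrite add0n.
- by move: aM bM; rewrite /M; lia.
Qed.

End LastValue.

Lemma nshuffles_mfact u v : sorted leq u -> sorted leq v ->
  nshuffles (size u) (size v) (u ++ v) * (mfact u * mfact v) = mfact (u ++ v).
Proof.
have mfact0 : mfact [::] = 1 by rewrite /mfact big_nil.
move Hn : (size u + size v) => n; elim: n u v Hn => [|n IH] u v;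
  case/lastP: u => [|u' a] Zn Su Sv; try by rewrite (nshuffles_0l Sv) mfact0 !mul1n.
  by rewrite size_rcons in Zn.
case/lastP: v => [|v' b] in Zn Sv *.
  by rewrite cats0 (nshuffles_k0 Su) mfact0 muln1 mul1n.
rewrite !size_rcons; apply: nshuffles_rcons_mfact => //.
- rewrite -(size_rcons v' b); apply: IH _ (sorted_rconsK Su) Sv.
  by move: Zn; rewrite !size_rcons; lia.
- rewrite -(size_rcons u' a); apply: IH _ Su (sorted_rconsK Sv).
  by move: Zn; rewrite !size_rcons; lia.
Qed.

(** * The right-hand side *)

Lemma shb_shuffle k l s : s \in maps (k + l) -> shb k l s = shuffle k l s.
Proof.
rewrite mem_maps => /andP [/eqP Zs _]; rewrite /shb /qshb /shuffle Zs eqxx /=.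
apply/idP/idP => [/andP [/and3P [Is -> ->] Us] | /and3P [Ps -> ->]].
  have Ps := uniq_perm Us (iota_uniq _ _) (is_surj_mem_iota Is).
  have Em : smax s = k + l by rewrite -Zs (perm_size Ps) size_iota.
  by rewrite -Em Ps.
rewrite (perm_uniq Ps) iota_uniq (eq_is_surj (perm_mem Ps)) /is_surj smax_iota !andbT.
by rewrite allss andbT; apply/allP => x; rewrite mem_iota => /andP [].
Qed.

Lemma count_Sh k l (Q : pred (seq nat)) :
  count Q (Sh k l) = count (fun s => shuffle k l s && Q s) (maps (k + l)).
Proof.
by rewrite count_filter; apply: eq_in_count => s /shb_shuffle /= ->; rewrite andbC.
Qed.

Lemma ShP k l s : s \in Sh k l -> shuffle k l s.
Proof. by rewrite mem_filter => /andP [sh_s /shb_shuffle <-]. Qed.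

Lemma sorted_comp_ltn t s : sorted leq t -> sorted ltn s ->
  all (fun x => 0 < x <= size t) s -> sorted leq (cmp t s).
Proof.
move=> St Ss Rs.
apply: (homo_sorted_in (e := ltn) (P := [pred y | 0 < y <= size t])) => // x y.
rewrite !inE => Hx Hy lt_xy; apply: (sorted_leq_nth leq_trans leqnn 0 St);
  rewrite ?inE; lia.
Qed.

Lemma comp_Inc_Sh_bisorted k l t s :
  t \in Inc (k + l) -> s \in Sh k l -> bisorted k l (cmp t s).
Proof.
move=> /IncP [Zt St It _] /ShP sh_s; have /and3P [Ps S1 S2] := sh_s.
rewrite -Zt in Ps; have Pts := perm_comp_iota Ps.
have /allP Rs : all (fun x => 0 < x <= size t) s by rewrite Zt shuffle_range.
rewrite /bisorted (perm_size Pts) Zt eqxx (eq_is_surj (perm_mem Pts)) It /=.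
rewrite /cmp -map_take -map_drop !sorted_comp_ltn //; apply/allP => x Hx; apply: Rs.
  exact: mem_drop Hx.
exact: mem_take Hx.
Qed.

Lemma sort_bisorted_Inc k l h : bisorted k l h -> sort leq h \in Inc (k + l).
Proof.
case/and4P => /eqP <- Ih _ _; have Ps : perm_eq (sort leq h) h by rewrite perm_sort.
rewrite -(perm_size Ps) mem_filter /incb (eq_is_surj (perm_mem Ps)) Ih.
by rewrite sort_sorted ?is_surj_maps ?(eq_is_surj (perm_mem Ps)) //; apply: leq_total.
Qed.

Lemma comp_Inc_Sh_eq k l h t s : t \in Inc (k + l) -> s \in Sh k l ->
  (h == cmp t s) = (t == sort leq h) && (cmp (sort leq h) s == h).
Proof.
move=> /IncP [Zt St _ _] /ShP /shuffle_perm Ps.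
apply/eqP/andP => [Eh | [/eqP -> /eqP ->] //]; suff Et : t = sort leq h by rewrite -Et Eh.
apply/(sorted_eq leq_trans anti_leq St (sort_sorted leq_total h)).
by rewrite perm_sym perm_sort Eh perm_comp_iota // Zt.
Qed.

Lemma nshuffles_eq0 k l h :
  sort leq h \in Inc (k + l) -> ~~ bisorted k l h -> nshuffles k l h = 0.
Proof.
move=> IT nBh; apply/eqP; rewrite -leqn0 leqNgt -has_count; apply/hasPn => s s_maps /=.
apply/negP => /andP [sh_s /eqP Eh]; move: nBh; rewrite -Eh comp_Inc_Sh_bisorted //.
by rewrite mem_filter shb_shuffle // sh_s.
Qed.

Lemma bisorted_nshuffles_mfact k l h : bisorted k l h ->
  nshuffles k l h * (mfact (take k h) * mfact (drop k h)) = mfact h.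
Proof.
case/and4P => /eqP Zh _ Su Sv.
have Zu : size (take k h) = k by rewrite size_takel // Zh leq_addr.
have Zv : size (drop k h) = l by rewrite size_drop Zh addKn.
by have := nshuffles_mfact Su Sv; rewrite Zu Zv cat_take_drop.
Qed.

Lemma sum_natr_count (R : pzSemiRingType) (T : Type) (r : seq T) (p : pred T) :
  (\sum_(x <- r) (p x)%:R)%R = ((count p r)%:R)%R :> R.
Proof. by elim: r => [|x r IH]; rewrite ?big_nil // big_cons IH /= natrD. Qed.

Lemma rhs_sum_weight k l h : rhs_sum k l h = weight k l h.
Proof.
rewrite /rhs_sum /basis /weight.
under eq_big_seq => s Hs do under eq_big_seq => t Ht do rewrite (comp_Inc_Sh_eq h Ht Hs).
case: (boolP (sort leq h \in Inc (k + l))) => [IT | nIT]; last first.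
  rewrite big1 => [|s _]; last first.
    rewrite big1_seq // => t /andP [_ Ht].
    by case: eqP => [Et | _]; [rewrite -Et Ht in nIT | rewrite mulr0].
  by case: ifP => // /sort_bisorted_Inc; rewrite (negbTE nIT).
under eq_bigr => s _.
  rewrite (sum_seq_single (Inc_uniq _) IT) => [|t _ /negbTE ->]; last by rewrite mulr0.
  rewrite eqxx; over.
rewrite -big_distrr /= sum_natr_count count_Sh -/(nshuffles k l h).
case: ifP => [Bh | /negbT nBh]; last by rewrite nshuffles_eq0 // mulr0.
have N_mfact := bisorted_nshuffles_mfact Bh.
have /IncP [_ _ /is_surj_gt0 T_gt0 _] := IT.
have Ph : perm_eq (sort leq h) h by rewrite perm_sort.
rewrite sfact_mfact // (perm_mfact Ph) -N_mfact natrM.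
have N0 : nshuffles k l h != 0.
  by apply/eqP => N0; move: N_mfact (mfact_gt0 h); rewrite N0 => <-.
field; by rewrite !pnatr_eq0 N0 -!lt0n !mfact_gt0.
Qed.

Theorem mainTheorem1 (k l : nat) : lhs_sum k l = rhs_sum k l.
Proof.
apply: functional_extensionality => h.
by rewrite lhs_sum_weight rhs_sum_weight.
Qed.
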